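(* Let $(\varphi,\mathcal A,V)$ be a linear system with $\mathcal A$ and $V$ finite dimensional. (i) If $(\pi,S,T,W)$ is a principle dilation system of $(\varphi,\mathcal A,V)$ with $\dim W=(\dim\mathcal A)(\dim V)$, then every linearly minimal homomorphism dilation system of $(\varphi,\mathcal A,V)$ is irreducible, hence principle. (ii) If $(\pi,S,T,W)$ is a principle dilation system of $(\varphi,\mathcal A,V)$ and $(\pi_1,S_1,T_1,W_1)$ is a linearly minimal homomorphism dilation system with $\dim W_1\le\dim W$, then $(\pi_1,S_1,T_1,W_1)$ is irreducible.
   Context: Fix a field $\mathbb F$; all algebras and vector spaces are over $\mathbb F$, and $L(X)$ is the algebra of linear maps $X\to X$. A linear system $(\varphi,\mathcal A,V)$: $\mathcal A$ a unital associative algebra with unit $I$, $V$ a vector space, $\varphi:\mathcal A\to L(V)$ linear with $\varphi(I)=\mathrm{id}_V$. A homomorphism dilation system $(\pi,S,T,W)$: $W$ a vector space, $\pi:\mathcal A\to L(W)$ a unital homomorphism, $T:V\to W$ injective linear, $S:W\to V$ surjective linear, $\varphi(a)=S\pi(a)T$ for all $a$. It is linearly minimal if $W=\mathrm{span}\{\pi(a)Tv\}$, irreducible if $\ker S$ contains no nonzero subspace invariant under all $\pi(a)$, and principle if linearly minimal and irreducible. *)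

From HB Require Import structures.
From mathcomp Require Import all_boot all_order all_algebra all_field.
Set Implicit Arguments. Unset Strict Implicit. Unset Printing Implicit Defensive.
Import GRing.Theory.
Local Open Scope ring_scope.

Section Dil.
Variable F : fieldType.
Variable A : falgType F.
Variable V : vectType F.

Definition linear_system (phi : A -> 'End(V)) : Prop :=
  (forall (c : F) (x y : A), phi (c *: x + y) = c *: phi x + phi y) /\
  phi 1 = \1%VF.

Variable W : vectType F.

Definition hom_dilation (phi : A -> 'End(V)) (pi : A -> 'End(W))
  (S : 'Hom(W, V)) (T : 'Hom(V, W)) : Prop :=
  (forall (c : F) (x y : A), pi (c *: x + y) = c *: pi x + pi y) /\
  pi 1 = \1%VF /\
  (forall x y : A, pi (x * y) = (pi x \o pi y)%VF) /\
  injective T /\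
  (forall v : V, exists w : W, S w = v) /\
  (forall (a : A) (v : V), phi a v = S (pi a (T v))).

(* W = span {pi(a) T v} : every subspace containing all pi(a) T v is W *)
Definition lin_minimal (pi : A -> 'End(W)) (T : 'Hom(V, W)) : Prop :=
  forall U : {vspace W}, (forall (a : A) (v : V), pi a (T v) \in U) -> U = fullv.

Definition irreducible_dil (pi : A -> 'End(W)) (S : 'Hom(W, V)) : Prop :=
  forall U : {vspace W}, (U <= lker S)%VS ->
    (forall a : A, (pi a @: U <= U)%VS) -> U = 0%VS.

Definition principle_dil (pi : A -> 'End(W)) (S : 'Hom(W, V)) (T : 'Hom(V, W)) : Prop :=
  lin_minimal pi T /\ irreducible_dil pi S.

End Dil.

(** Identify A ⊗ V with the V-valued functions on a basis (e_i) of A. Every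
homomorphism dilation (pi, S, T, W) yields a compression map
Phi x = sum_i pi(e_i) T(x_i) from A ⊗ V to W, which is onto exactly when the
dilation is linearly minimal, and satisfies S pi(b) Phi x = sum_i phi(b e_i) x_i,
an expression depending on phi alone. Hence ker Phi is always contained in the
space K of such x annihilated for every b, with equality when the dilation is
irreducible. If W1 is linearly minimal and dim W1 <= dim W for a principle W,
rank-nullity forces ker Phi1 = ker Phi = K, and a linearly minimal dilation with
ker Phi1 = K is irreducible. For (i), dim W1 <= dim (A ⊗ V) always holds. *)

From HB Require Import structures.
From mathcomp Require Import all_boot all_order all_algebra all_field.
From mathcomp Require Import zify.
Set Implicit Arguments. Unset Strict Implicit. Unset Printing Implicit Defensive.
Import GRing.Theory.
Local Open Scope ring_scope.

Section LinfunOf.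
Variables (F : fieldType) (U W : vectType F) (f : U -> W).
Hypothesis f_lin : linear f.

Definition linfun_of : 'Hom(U, W) :=
  linfun (HB.pack f (GRing.isLinear.Build _ _ _ _ f f_lin) : {linear U -> W}).

Lemma linfun_ofE u : linfun_of u = f u.
Proof. by rewrite lfunE. Qed.

End LinfunOf.

Section Dilation.
Variables (F : fieldType) (A : falgType F) (V : vectType F) (phi : A -> 'End(V)).

Local Notation n := (\dim (fullv : {vspace A})).
Local Notation e i := ((vbasis (fullv : {vspace A}))`_i).

Definition tensorAV := {ffun 'I_n -> V}.

Lemma dim_tensorAV : \dim (fullv : {vspace tensorAV}) = (n * \dim (fullv : {vspace V}))%N.
Proof. by rewrite !dimvf /dim /= card_ord. Qed.

(* The vectors of A ⊗ V killed by every compression S pi(b) Phi, see [compress_Phi]. *)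
Definition phi_annihilated (x : tensorAV) : Prop :=
  forall b : A, \sum_(i < n) phi (b * e i) (x i) = 0.

Section OneDilation.
Variables (W : vectType F) (pi : A -> 'End(W)) (S : 'Hom(W, V)) (T : 'Hom(V, W)).

Definition compression (x : tensorAV) : W := \sum_(i < n) pi (e i) (T (x i)).

Lemma compression_linear : linear compression.
Proof.
move=> c x y; rewrite /compression scaler_sumr -big_split.
by apply: eq_bigr => i _; rewrite !ffunE !linearP.
Qed.

Definition Phi : 'Hom(tensorAV, W) := linfun_of compression_linear.

Lemma PhiE x : Phi x = \sum_(i < n) pi (e i) (T (x i)).
Proof. exact: linfun_ofE. Qed.

Hypothesis dil : hom_dilation phi pi S T.

Lemma dil_linear : linear pi.
Proof. by case: dil. Qed.

Lemma dil1 : pi 1 = \1%VF.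
Proof. by case: dil => _ []. Qed.

Lemma dilM x y : pi (x * y) = (pi x \o pi y)%VF.
Proof. by case: dil => _ [_ []]. Qed.

Lemma dil_compress a v : phi a v = S (pi a (T v)).
Proof. by case: dil => _ [_ [_ [_ []]]]. Qed.

Lemma compress_Phi b x : S (pi b (Phi x)) = \sum_(i < n) phi (b * e i) (x i).
Proof.
rewrite PhiE !linear_sum; apply: eq_bigr => i _.
by rewrite dil_compress dilM comp_lfunE.
Qed.

Lemma phi_annihilated_ker x : x \in lker Phi -> phi_annihilated x.
Proof. by rewrite memv_ker => /eqP Px0 b; rewrite -compress_Phi Px0 !linear0. Qed.

Lemma limg_Phi : lin_minimal pi T -> limg Phi = fullv.
Proof.
move=> minimal; apply: minimal => a v.
have -> : a = \sum_(i < n) coord (vbasis fullv) i a *: e i by exact: coord_vbasis (memvf a).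
pose x : tensorAV := [ffun i => coord (vbasis fullv) i a *: v].
suff -> : pi (\sum_(i < n) coord (vbasis fullv) i a *: e i) (T v) = Phi x.
  exact: memv_img (memvf x).
rewrite PhiE -(linfun_ofE dil_linear) linear_sum sum_lfunE.
by apply: eq_bigr => i _; rewrite linearZ /= linfun_ofE ffunE scale_lfunE !linearZ.
Qed.

Lemma dim_ker_Phi : lin_minimal pi T ->
  (\dim (lker Phi) + \dim (fullv : {vspace W}))%N = \dim (fullv : {vspace tensorAV}).
Proof. by move=> minimal; rewrite -limg_Phi // -(limg_ker_dim Phi fullv) capfv. Qed.

Lemma dim_le_tensorAV : lin_minimal pi T ->
  (\dim (fullv : {vspace W}) <= n * \dim (fullv : {vspace V}))%N.
Proof. by move=> minimal; rewrite -dim_tensorAV -(dim_ker_Phi minimal) leq_addl. Qed.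

(* The orbit {pi(b) w} is an invariant subspace containing w = pi(1) w. *)
Lemma irreducible_dil_eq0 w :
  irreducible_dil pi S -> (forall b, S (pi b w) = 0) -> w = 0.
Proof.
move=> irr Sw0.
have orbit_lin : linear (fun b => pi b w).
  by move=> c x y; rewrite dil_linear add_lfunE scale_lfunE.
pose G := linfun_of orbit_lin.
have orbit0 : limg G = 0%VS.
  apply: irr => [|a].
    by apply/subvP => _ /memv_imgP [b _ ->]; rewrite memv_ker linfun_ofE Sw0.
  apply/subvP => _ /memv_imgP [_ /memv_imgP [b _ ->] ->].
  by rewrite linfun_ofE -comp_lfunE -dilM -(linfun_ofE orbit_lin) memv_img ?memvf.
have : G 1 \in limg G by rewrite memv_img ?memvf.
by rewrite orbit0 memv0 linfun_ofE dil1 id_lfunE => /eqP.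
Qed.

Lemma ker_Phi_annihilated :
  irreducible_dil pi S -> forall x, phi_annihilated x -> x \in lker Phi.
Proof.
move=> irr x x_ann; rewrite memv_ker; apply/eqP.
by apply: irreducible_dil_eq0 => // b; rewrite compress_Phi.
Qed.

Lemma irreducible_dil_of_ker :
  lin_minimal pi T -> (forall x, phi_annihilated x -> x \in lker Phi) ->
  irreducible_dil pi S.
Proof.
move=> minimal ker_ann U US Uinv; apply/eqP; rewrite -subv0; apply/subvP => u Uu.
have : u \in limg Phi by rewrite limg_Phi ?memvf.
case/memv_imgP => x _ ux; rewrite ux in Uu *.
have /ker_ann : phi_annihilated x.
  move=> b; rewrite -compress_Phi; apply/eqP; rewrite -memv_ker.
  by apply: (subvP US); apply: (subvP (Uinv b)); exact: memv_img.
by rewrite memv_ker memv0.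
Qed.

End OneDilation.

Lemma irreducible_dil_of_dim_le
    (W : vectType F) (pi : A -> 'End(W)) (S : 'Hom(W, V)) (T : 'Hom(V, W))
    (W1 : vectType F) (pi1 : A -> 'End(W1)) (S1 : 'Hom(W1, V)) (T1 : 'Hom(V, W1)) :
  hom_dilation phi pi S T -> principle_dil pi S T ->
  hom_dilation phi pi1 S1 T1 -> lin_minimal pi1 T1 ->
  (\dim (fullv : {vspace W1}) <= \dim (fullv : {vspace W}))%N ->
  irreducible_dil pi1 S1.
Proof.
move=> dil [minimal irr] dil1 minimal1 dimW1.
have ker1_sub : (lker (Phi pi1 T1) <= lker (Phi pi T))%VS.
  apply/subvP => x /(phi_annihilated_ker dil1) x_ann.
  exact: ker_Phi_annihilated dil irr x x_ann.
have ker1_eq : lker (Phi pi1 T1) = lker (Phi pi T).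
  apply/eqP; rewrite eqEdim ker1_sub /=.
  have := dim_ker_Phi dil minimal; have := dim_ker_Phi dil1 minimal1; lia.
apply: irreducible_dil_of_ker dil1 minimal1 _ => x x_ann.
by rewrite ker1_eq; exact: ker_Phi_annihilated dil irr x x_ann.
Qed.

End Dilation.

Theorem corollary3p4 (F : fieldType) (A : falgType F) (V : vectType F)
  (phi : A -> 'End(V)) (Hphi : linear_system phi) :
  (forall (W : vectType F) (pi : A -> 'End(W)) (S : 'Hom(W, V)) (T : 'Hom(V, W)),
     hom_dilation phi pi S T -> principle_dil pi S T ->
     \dim (fullv : {vspace W}) = (\dim (fullv : {vspace A}) * \dim (fullv : {vspace V}))%N ->
     forall (W1 : vectType F) (pi1 : A -> 'End(W1)) (S1 : 'Hom(W1, V)) (T1 : 'Hom(V, W1)),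
       hom_dilation phi pi1 S1 T1 -> lin_minimal pi1 T1 ->
       irreducible_dil pi1 S1 /\ principle_dil pi1 S1 T1)
  /\
  (forall (W : vectType F) (pi : A -> 'End(W)) (S : 'Hom(W, V)) (T : 'Hom(V, W))
          (W1 : vectType F) (pi1 : A -> 'End(W1)) (S1 : 'Hom(W1, V)) (T1 : 'Hom(V, W1)),
     hom_dilation phi pi S T -> principle_dil pi S T ->
     hom_dilation phi pi1 S1 T1 -> lin_minimal pi1 T1 ->
     (\dim (fullv : {vspace W1}) <= \dim (fullv : {vspace W}))%N ->
     irreducible_dil pi1 S1).
Proof.
split; last exact: irreducible_dil_of_dim_le.
move=> W pi S T dil principle dimW W1 pi1 S1 T1 dil1 minimal1.
have irr1 : irreducible_dil pi1 S1.
  apply: (irreducible_dil_of_dim_le dil principle dil1 minimal1).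
  by rewrite dimW; exact: dim_le_tensorAV dil1 minimal1.
by split; last split.
Qed.
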